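(* Let $N,n,q\ge1$ and let $A\in\mathbb{R}^{n\times n}$, $B_v\in\mathbb{R}^{n\times q}$, $G\in\mathbb{R}^{q\times n}$, $B_u\in\mathbb{R}^{n\times1}$, $C\in\mathbb{R}^{1\times n}$. Let $M_0,\dots,M_{q-1}\in\mathbb{R}^{N\times N}$ be simultaneously diagonalized by an invertible $T$, i.e. $T^{-1}M_iT=\Lambda_i=\mathrm{diag}(\lambda_0(M_i),\dots,\lambda_{N-1}(M_i))$ for each $i$. For $i=0,\dots,q-1$ let $\Delta_i\in\mathbb{R}^{q\times q}$ be the matrix with $(i,i)$ entry $1$ and all other entries $0$, and let $M=\sum_{i=0}^{q-1}M_i\otimes\Delta_i\in\mathbb{R}^{Nq\times Nq}$. Then $(T\otimes I_q)^{-1}M(T\otimes I_q)=\sum_{i=0}^{q-1}\Lambda_i\otimes\Delta_i$ is diagonal. Moreover, consider the linear system $$\dot{\tilde x}=\big[(I_N\otimes A)+(I_N\otimes B_v)M(I_N\otimes G)\big]\tilde x+(I_N\otimes B_u)\tilde u,\qquad \tilde y=(I_N\otimes C)\tilde x,$$ with constant input $\tilde u\in\mathbb{R}^N$, and assume $A+\sum_{i=0}^{q-1}\lambda_k(M_i)B_v\Delta_iG$ is invertible for every $k$. Then the steady-state readout $\tilde y^*$ satisfies $T^{-1}\tilde y^*=S\,T^{-1}\tilde u$ where $S$ is diagonal with entries $$[S]_{kk}=-C\Big(A+\sum_{i=0}^{q-1}\lambda_k(M_i)B_v\Delta_iG\Big)^{-1}B_u,\qquad k=0,\dots,N-1.$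$
   Context: $\otimes$ denotes the Kronecker product, $I_m$ the $m\times m$ identity. This describes $N$ identical cells, each with $q$ coupling signals, where signal $i$ is transmitted between cells according to interconnection matrix $M_i$ (the system linearized about a homogeneous steady state). *)

(* Kronecker product = tensmx (A *t B) from mathcomp.real_closed.mxtens,
   with the standard ordering: (A *t B) (i1*p + i2) (j1*q + j2) = A i1 j1 * B i2 j2. *)
From HB Require Import structures.
From mathcomp Require Import all_boot all_order all_algebra.
From mathcomp Require Export mxtens.
Set Implicit Arguments. Unset Strict Implicit. Unset Printing Implicit Defensive.
Import Order.TTheory GRing.Theory Num.Theory.
Local Open Scope ring_scope.

(* Delta_i (the q x q matrix with (i,i) entry 1, zeros elsewhere) is written
   (delta_mx i i : 'M[R]_q) below. *)

Definition Lam (R : nzRingType) (N : nat) (lam : 'I_N -> R) : 'M[R]_N :=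
  diag_mx (\row_k lam k).

Definition bigM (R : nzRingType) (N q : nat) (Ms : 'I_q -> 'M[R]_N) : 'M[R]_(N * q) :=
  \sum_(i < q) (Ms i *t (delta_mx i i : 'M[R]_q)).

Definition sysJ (R : nzRingType) (N n q : nat) (A : 'M[R]_n) (Bv : 'M[R]_(n, q))
  (G : 'M[R]_(q, n)) (M : 'M[R]_(N * q)) : 'M[R]_(N * n) :=
  ((1%:M : 'M[R]_N) *t A) + ((1%:M : 'M[R]_N) *t Bv) *m M *m ((1%:M : 'M[R]_N) *t G).

Definition sysBu (R : nzRingType) (N n : nat) (Bu : 'M[R]_(n, 1)) : 'M[R]_(N * n, N) :=
  castmx (erefl (N * n)%N, muln1 N) ((1%:M : 'M[R]_N) *t Bu).

Definition sysC (R : nzRingType) (N n : nat) (C : 'M[R]_(1, n)) : 'M[R]_(N, N * n) :=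
  castmx (muln1 N, erefl (N * n)%N) ((1%:M : 'M[R]_N) *t C).

Definition steady_state (R : nzRingType) (m N : nat) (J : 'M[R]_m) (B : 'M[R]_(m, N))
  (u : 'cV[R]_N) (x : 'cV[R]_m) : Prop := J *m x + B *m u = 0.

From HB Require Import structures.
From mathcomp Require Import all_boot all_order all_algebra.
From mathcomp Require Import mxtens.
Import Order.TTheory GRing.Theory Num.Theory.
Local Open Scope ring_scope.

(* Conjugation by T (x) I_q turns each M_i (x) Delta_i into Lambda_i (x) Delta_i,
   so M becomes diagonal.  Conjugation by T (x) I_n commutes with I_N (x) B_v and
   I_N (x) G, hence turns the system matrix into the block-diagonal matrix with
   blocks A_k = A + sum_i lambda_k(M_i) B_v Delta_i G.  In the coordinates
   w = (T^-1 (x) I_n) x the steady-state equation therefore splits into the N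
   equations A_k w_k + (T^-1 u)_k B_u = 0, whose solutions w_k are read out by C
   as the diagonal gains S_kk. *)

Section Kronecker.
Context {R : comPzRingType}.

Lemma tensmxDl m n p q (A B : 'M[R]_(m, n)) (C : 'M[R]_(p, q)) :
  (A + B) *t C = A *t C + B *t C.
Proof. by apply/matrixP=> i j; rewrite !mxE mulrDl. Qed.

Lemma tensmxDr m n p q (A : 'M[R]_(m, n)) (B C : 'M[R]_(p, q)) :
  A *t (B + C) = A *t B + A *t C.
Proof. by apply/matrixP=> i j; rewrite !mxE mulrDr. Qed.

Lemma tensmxNl m n p q (A : 'M[R]_(m, n)) (B : 'M[R]_(p, q)) :
  (- A) *t B = - (A *t B).
Proof. by apply/matrixP=> i j; rewrite !mxE mulNr. Qed.

Lemma tensmxZl m n p q a (A : 'M[R]_(m, n)) (B : 'M[R]_(p, q)) :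
  (a *: A) *t B = a *: (A *t B).
Proof. by apply/matrixP=> i j; rewrite !mxE mulrA. Qed.

Lemma tensmxZr m n p q a (A : 'M[R]_(m, n)) (B : 'M[R]_(p, q)) :
  A *t (a *: B) = a *: (A *t B).
Proof. by apply/matrixP=> i j; rewrite !mxE mulrCA. Qed.

Lemma tensmx_suml m n p q I (r : seq I) (P : pred I)
    (F : I -> 'M[R]_(m, n)) (B : 'M[R]_(p, q)) :
  (\sum_(i <- r | P i) F i) *t B = \sum_(i <- r | P i) (F i *t B).
Proof.
by apply: (big_morph (fun A => A *t B)) => [A A'|]; rewrite (tensmxDl, tens0mx).
Qed.

Lemma tensmx_sumr m n p q I (r : seq I) (P : pred I)
    (A : 'M[R]_(m, n)) (F : I -> 'M[R]_(p, q)) :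
  A *t (\sum_(i <- r | P i) F i) = \sum_(i <- r | P i) (A *t F i).
Proof.
by apply: (big_morph (fun B => A *t B)) => [B B'|]; rewrite (tensmxDr, tensmx0).
Qed.

Lemma tensmx11 m n : (1%:M : 'M[R]_m) *t (1%:M : 'M[R]_n) = 1%:M.
Proof.
apply/matrixP=> i j.
case: (mxtens_indexP i) => i1 i2; case: (mxtens_indexP j) => j1 j2.
rewrite tensmxE !mxE -natrM mulnb; congr (nat_of_bool _)%:R.
apply/andP/eqP => [[/eqP-> /eqP->] //|].
by move/(congr1 (@mxtens_unindex m n)); rewrite !mxtens_indexK => -[-> ->].
Qed.

(* [tensmx_mul] at column type [1] rather than [1 * 1], so that it rewrites
   products of column vectors. *)
Lemma tensmx_mul_cV m n p q (A : 'M[R]_(m, n)) (B : 'M[R]_(p, q))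
    (u : 'cV[R]_n) (b : 'cV[R]_q) :
  @mulmx _ (m * p) (n * q) 1 (A *t B) (u *t b) = (A *m u) *t (B *m b).
Proof. exact: (@tensmx_mul R m n p q 1 1). Qed.

Lemma castmx_tensmx1 {m n} (e_m : (m * 1)%N = m) (e_n : (n * 1)%N = n)
    (A : 'M[R]_(m, n)) :
  castmx (e_m, e_n) (A *t (1%:M : 'M[R]_1)) = A.
Proof. by rewrite tens_mx_scalar scale1r castmx_comp castmx_id. Qed.

Lemma tensmx1_tens1mxC N m n (X : 'M[R]_N) (B : 'M[R]_(m, n)) :
  (X *t 1%:M) *m (1%:M *t B) = (1%:M *t B) *m (X *t 1%:M).
Proof. by rewrite !tensmx_mul !mul1mx !mulmx1. Qed.

Lemma is_diag_mx_tens m n (A : 'M[R]_m) (B : 'M[R]_n) :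
  is_diag_mx A -> is_diag_mx B -> is_diag_mx (A *t B).
Proof.
move=> /is_diag_mxP diagA /is_diag_mxP diagB; apply/is_diag_mxP => i j.
case: (mxtens_indexP i) => i1 i2; case: (mxtens_indexP j) => j1 j2 /= neq_ij.
rewrite tensmxE.
have [eq1|/diagA->] := eqVneq (i1 : nat) j1; last by rewrite mul0r.
have [eq2|/diagB->] := eqVneq (i2 : nat) j2; last by rewrite mulr0.
by move: neq_ij; rewrite eq1 eq2 eqxx.
Qed.

Lemma is_diag_mx_sum m n I (r : seq I) (P : pred I) (F : I -> 'M[R]_(m, n)) :
  (forall i, P i -> is_diag_mx (F i)) -> is_diag_mx (\sum_(i <- r | P i) F i).
Proof.
move=> diagF; apply: (big_ind (@is_diag_mx _ m n)) => //.
  exact: mx0_is_diag.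
move=> A B /is_diag_mxP diagA /is_diag_mxP diagB.
by apply/is_diag_mxP => i j neq_ij; rewrite mxE diagA // diagB // addr0.
Qed.

Lemma delta_mx_is_diag n (i : 'I_n) : is_diag_mx (delta_mx i i : 'M[R]_n).
Proof.
apply/is_diag_mxP => j k neq_jk; rewrite mxE.
case: eqP => [eq_ji|] //; case: eqP => [eq_ki|] //.
by move: neq_jk; rewrite eq_ji eq_ki eqxx.
Qed.

End Kronecker.

Section BlockDiagonal.
Context {R : comPzRingType} {N : nat}.

Definition blockdiag {m n} (X : 'I_N -> 'M[R]_(m, n)) : 'M[R]_(N * m, N * n) :=
  \sum_k (delta_mx k k *t X k).

Lemma eq_blockdiag {m n} {X Y : 'I_N -> 'M[R]_(m, n)} :
  X =1 Y -> blockdiag X = blockdiag Y.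
Proof. by move=> eqXY; apply: eq_bigr => k _; rewrite eqXY. Qed.

Lemma tens_diag_mx_blockdiag m n (d : 'rV[R]_N) (B : 'M[R]_(m, n)) :
  diag_mx d *t B = blockdiag (fun k => d 0 k *: B).
Proof.
rewrite diag_mx_sum_delta tensmx_suml.
by apply: eq_bigr => k _; rewrite tensmxZl tensmxZr.
Qed.

Lemma tens1mx_blockdiag m n (B : 'M[R]_(m, n)) :
  1%:M *t B = blockdiag (fun=> B).
Proof.
rewrite -diag_const_mx tens_diag_mx_blockdiag.
by apply: eq_blockdiag => k; rewrite mxE scale1r.
Qed.

Lemma blockdiag1 n : blockdiag (fun=> 1%:M) = 1%:M :> 'M[R]_(N * n).
Proof. by rewrite -tens1mx_blockdiag tensmx11. Qed.

Lemma blockdiagD m n (X Y : 'I_N -> 'M[R]_(m, n)) :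
  blockdiag X + blockdiag Y = blockdiag (fun k => X k + Y k).
Proof. by rewrite -big_split; apply: eq_bigr => k _; rewrite tensmxDr. Qed.

Lemma blockdiag_sum m n q (X : 'I_q -> 'I_N -> 'M[R]_(m, n)) :
  \sum_(i < q) blockdiag (X i) = blockdiag (fun k => \sum_(i < q) X i k).
Proof. by rewrite exchange_big; apply: eq_bigr => k _; rewrite tensmx_sumr. Qed.

Lemma mul_blockdiag m n p (X : 'I_N -> 'M[R]_(m, n)) (Y : 'I_N -> 'M[R]_(n, p)) :
  blockdiag X *m blockdiag Y = blockdiag (fun k => X k *m Y k).
Proof.
rewrite mulmx_suml; apply: eq_bigr => k _.
rewrite mulmx_sumr (bigD1 k) //= big1 ?addr0 => [|l neq_lk].
  by rewrite tensmx_mul mul_delta_mx.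
by rewrite tensmx_mul mul_delta_mx_0 ?tens0mx // eq_sym.
Qed.

Lemma blockdiag_mul_tens m n (X : 'I_N -> 'M[R]_(m, n)) (v : 'cV[R]_N)
    (b : 'cV[R]_n) :
  blockdiag X *m (v *t b) = blockdiag (fun k => X k *m b) *m (v *t 1%:M).
Proof.
rewrite !mulmx_suml; apply: eq_bigr => k _.
by rewrite !tensmx_mul mulmx1.
Qed.

Lemma blockdiag_scalar (c : 'I_N -> 'M[R]_1) :
  blockdiag c = diag_mx (\row_k c k 0 0) *t 1%:M.
Proof.
rewrite tens_diag_mx_blockdiag; apply: eq_blockdiag => k.
by rewrite mxE scalemx1 -mx11_scalar.
Qed.

End BlockDiagonal.

Section Inverses.
Context {R : comUnitRingType}.

Lemma invmx_tensmx m n (A : 'M[R]_m) (B : 'M[R]_n) :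
  A \in unitmx -> B \in unitmx -> invmx (A *t B) = invmx A *t invmx B.
Proof.
move=> unitA unitB.
have invAB : (invmx A *t invmx B) *m (A *t B) = 1%:M.
  by rewrite tensmx_mul !mulVmx // tensmx11.
have [_ unitAB] := mulmx1_unit invAB.
by rewrite -[LHS]mul1mx -invAB mulmxK.
Qed.

Lemma mulKVmx_tensmx1 N n p (T : 'M[R]_N) (x : 'M[R]_(N * n, p)) :
  T \in unitmx -> (T *t 1%:M) *m ((invmx T *t 1%:M) *m x) = x.
Proof.
by move=> unitT; rewrite mulmxA tensmx_mul mulmxV // mul1mx tensmx11 mul1mx.
Qed.

Lemma blockdiag_solve {N n} {A : 'I_N -> 'M[R]_n} {w b : 'cV[R]_(N * n)} :
  (forall k, A k \in unitmx) -> blockdiag A *m w + b = 0 ->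
  w = - (blockdiag (fun k => invmx (A k)) *m b).
Proof.
move=> unitA /eqP; rewrite addr_eq0 => /eqP Aw.
rewrite -mulmxN -Aw mulmxA mul_blockdiag.
by rewrite (eq_blockdiag (fun k => mulVmx (unitA k))) blockdiag1 mul1mx.
Qed.

End Inverses.

Section Network.
Context {R : comUnitRingType}.

Definition mode_mx {N n q} (A : 'M[R]_n) (Bv : 'M[R]_(n, q)) (G : 'M[R]_(q, n))
    (lam : 'I_q -> 'I_N -> R) (k : 'I_N) : 'M[R]_n :=
  A + \sum_i lam i k *: (Bv *m delta_mx i i *m G).

Lemma sysBu_mul N n (Bu : 'M[R]_(n, 1)) (u : 'cV[R]_N) :
  sysBu N Bu *m u = (1%:M *t Bu) *m (u *t 1%:M).
Proof.
rewrite /sysBu -{1}(castmx_tensmx1 (muln1 N) (muln1 1) u) mulmx_cast.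
by rewrite castmx_comp !castmx_id.
Qed.

Lemma sysC_mul N n (C : 'M[R]_(1, n)) (x : 'cV[R]_(N * n)) :
  sysC N C *m x = castmx (muln1 N, muln1 1) ((1%:M *t C) *m x).
Proof. by rewrite castmx_mul castmx_id. Qed.

Lemma conj_bigM {N q} {Ms : 'I_q -> 'M[R]_N} {T : 'M[R]_N} {D : 'I_q -> 'M[R]_N} :
  (forall i, invmx T *m Ms i *m T = D i) ->
  (invmx T *t 1%:M) *m bigM Ms *m (T *t 1%:M) = \sum_i (D i *t delta_mx i i).
Proof.
move=> conjMs; rewrite mulmx_sumr mulmx_suml; apply: eq_bigr => i _.
by rewrite !tensmx_mul mul1mx mulmx1 conjMs.
Qed.

Lemma conj_sysJ {N n q} (A : 'M[R]_n) (Bv : 'M[R]_(n, q)) (G : 'M[R]_(q, n))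
    {Ms : 'I_q -> 'M[R]_N} {T : 'M[R]_N} {lam : 'I_q -> 'I_N -> R} :
  T \in unitmx -> (forall i, invmx T *m Ms i *m T = Lam (lam i)) ->
  (invmx T *t 1%:M) *m sysJ A Bv G (bigM Ms) *m (T *t 1%:M) =
  blockdiag (mode_mx A Bv G lam).
Proof.
move=> unitT conjMs; rewrite /sysJ mulmxDr mulmxDl.
have -> : (invmx T *t 1%:M) *m (1%:M *t A) *m (T *t 1%:M) = 1%:M *t A.
  by rewrite !tensmx_mul !mulmx1 !mul1mx mulVmx.
rewrite !mulmxA tensmx1_tens1mxC -!mulmxA -tensmx1_tens1mxC.
rewrite !mulmxA -!(mulmxA (1%:M *t Bv)).
rewrite (conj_bigM conjMs) mulmx_suml mulmx_sumr.
under eq_bigr => i _ do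
  rewrite !tensmx_mul mul1mx mulmx1 mulmxA tens_diag_mx_blockdiag.
rewrite blockdiag_sum tens1mx_blockdiag blockdiagD; apply: eq_blockdiag => k.
by congr (_ + _); apply: eq_bigr => i _; rewrite mxE.
Qed.

Lemma steady_state_modal {N n q} {A : 'M[R]_n} {Bv : 'M[R]_(n, q)}
    {G : 'M[R]_(q, n)} {Bu : 'M[R]_(n, 1)} {Ms : 'I_q -> 'M[R]_N} {T : 'M[R]_N}
    {lam : 'I_q -> 'I_N -> R} {u : 'cV[R]_N} {x : 'cV[R]_(N * n)} :
  T \in unitmx -> (forall i, invmx T *m Ms i *m T = Lam (lam i)) ->
  steady_state (sysJ A Bv G (bigM Ms)) (sysBu N Bu) u x ->
  blockdiag (mode_mx A Bv G lam) *m ((invmx T *t 1%:M) *m x)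
    + (invmx T *m u) *t Bu = 0.
Proof.
move=> unitT conjMs steady.
rewrite -(conj_sysJ A Bv G unitT conjMs) -!mulmxA mulKVmx_tensmx1 //.
have <- : (invmx T *t 1%:M) *m (sysBu N Bu *m u) = (invmx T *m u) *t Bu.
  by rewrite sysBu_mul mulmxA tensmx_mul mulmx1 mul1mx tensmx_mul_cV mulmx1.
by rewrite -mulmxDr steady mulmx0.
Qed.

Lemma steady_state_readout {N n q} (A : 'M[R]_n) (Bv : 'M[R]_(n, q))
    (G : 'M[R]_(q, n)) (Bu : 'M[R]_(n, 1)) (C : 'M[R]_(1, n))
    {Ms : 'I_q -> 'M[R]_N} {T : 'M[R]_N} {lam : 'I_q -> 'I_N -> R}
    (u : 'cV[R]_N) (x : 'cV[R]_(N * n)) :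
  T \in unitmx -> (forall i, invmx T *m Ms i *m T = Lam (lam i)) ->
  (forall k, mode_mx A Bv G lam k \in unitmx) ->
  steady_state (sysJ A Bv G (bigM Ms)) (sysBu N Bu) u x ->
  invmx T *m (sysC N C *m x) =
  diag_mx (\row_k - (C *m invmx (mode_mx A Bv G lam k) *m Bu) 0 0)
    *m (invmx T *m u).
Proof.
move=> unitT conjMs unitAk steady.
have wE := blockdiag_solve unitAk (steady_state_modal unitT conjMs steady).
set w := (invmx T *t 1%:M) *m x in wE *; set v := invmx T *m u in wE *.
have xE : x = (T *t 1%:M) *m w by rewrite mulKVmx_tensmx1.
set S := diag_mx _.
have output : (1%:M *t C) *m w = (S *m v) *t 1%:M.
  rewrite wE mulmxN tens1mx_blockdiag mulmxA.
  rewrite mul_blockdiag blockdiag_mul_tens blockdiag_scalar tensmx_mul mulmx1.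
  have S_neg :
      S = - diag_mx (\row_k (C *m invmx (mode_mx A Bv G lam k) *m Bu) 0 0).
    by apply/matrixP => i j; rewrite !mxE mulNrn.
  by rewrite S_neg mulNmx tensmxNl.
rewrite sysC_mul xE mulmxA -tensmx1_tens1mxC -mulmxA output tensmx_mul_cV mulmx1.
by rewrite castmx_tensmx1 mulKmx.
Qed.

End Network.

Theorem mainTheorem3 (R : realFieldType) (N n q : nat)
  (hN : (0 < N)%N) (hn : (0 < n)%N) (hq : (0 < q)%N)
  (A : 'M[R]_n) (Bv : 'M[R]_(n, q)) (G : 'M[R]_(q, n))
  (Bu : 'M[R]_(n, 1)) (C : 'M[R]_(1, n))
  (Ms : 'I_q -> 'M[R]_N) (T : 'M[R]_N) (lam : 'I_q -> 'I_N -> R) :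
  T \in unitmx ->
  (forall i : 'I_q, invmx T *m Ms i *m T = Lam (lam i)) ->
  let M := bigM Ms in
  let TI := T *t (1%:M : 'M[R]_q) in
  (invmx TI *m M *m TI = \sum_(i < q) (Lam (lam i) *t (delta_mx i i : 'M[R]_q))
   /\ is_diag_mx (invmx TI *m M *m TI))
  /\
  ((forall k : 'I_N,
      (A + \sum_(i < q) lam i k *: (Bv *m (delta_mx i i : 'M[R]_q) *m G)) \in unitmx) ->
   forall (u : 'cV[R]_N) (x : 'cV[R]_(N * n)),
     steady_state (sysJ A Bv G M) (sysBu N Bu) u x ->
     let S : 'M[R]_N := diag_mx (\row_k
        (- (C *m invmx (A + \sum_(i < q) lam i k *: (Bv *m (delta_mx i i : 'M[R]_q) *m G))
              *m Bu) 0 0)) in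
     invmx T *m (sysC N C *m x) = S *m (invmx T *m u)).
Proof.
move=> unitT conjMs M TI; split.
  have conjM : invmx TI *m M *m TI = \sum_i (Lam (lam i) *t delta_mx i i).
    by rewrite invmx_tensmx ?unitmx1 // invmx1; exact: conj_bigM.
  split=> //; rewrite conjM; apply: is_diag_mx_sum => i _.
  by apply: is_diag_mx_tens; [exact: diag_mx_is_diag | exact: delta_mx_is_diag].
move=> unitAk u x steady S; exact: steady_state_readout.
Qed.
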